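(* Let $G=(V,E)$ be a locally finite, connected, infinite graph, fix a vertex $x\in V$, and consider Bernoulli$(p)$ bond percolation on $G$. Then \[ p'_{\mathrm{cut,E}}=p'_{\mathrm{cut,V}}=p_{\mathrm{c}}. \]
   Context: Bernoulli$(p)$ bond percolation on $G$ keeps each edge independently as ''open'' with probability $p$ and otherwise declares it ''closed''; $\mathbb{P}_p$ denotes its law. An open path is a path all of whose edges are open; $x\longleftrightarrow\infty$ is the event that the open cluster of $x$ has infinite diameter. The critical probability is $p_{\mathrm{c}}=\sup\{p\ge 0:\mathbb{P}_p(x\longleftrightarrow\infty)=0\}$. A vertex cutset separating $x$ from infinity is a set $\Pi\subset V$ such that the connected component of $x$ in the graph obtained from $G$ by deleting the vertices of $\Pi$ is finite; an edge cutset separating $x$ from infinity is a set $\Pi_E\subset E$ such that the connected component of $x$ in $G$ with the edges of $\Pi_E$ deleted is finite. For a vertex cutset $\Pi$ and $v\in\Pi$, $A(x,v,\Pi)$ is the event that $x$ is connected to $v$ by an open path that uses no vertex of $\Pi\setminus\{v\}$. For an edge cutset $\Pi_E$ and $e\in\Pi_E$, $A(x,e,\Pi_E)$ is the event that $e$ is open and $x$ is connected to $e$ by an open path that uses no edge of $\Pi_E\setminus\{e\}$. Define $p'_{\mathrm{cut,V}}=\sup\{p\ge0:\inf_{\Pi}\sum_{v\in\Pi}\mathbb{P}_p[A(x,v,\Pi)]=0\}$, the infimum over all vertex cutsets $\Pi$ separating $x$ from infinity, and $p'_{\mathrm{cut,E}}=\sup\{p\ge0:\inf_{\Pi_E}\sum_{e\in\Pi_E}\mathbb{P}_p[A(x,e,\Pi_E)]=0\}$,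 the infimum over all edge cutsets $\Pi_E$ separating $x$ from infinity. *)

From HB Require Import structures.
From Stdlib Require Import Relations.
From mathcomp Require Import all_boot all_algebra.
From mathcomp Require Import all_classical all_reals all_analysis.
Set Implicit Arguments. Unset Strict Implicit. Unset Printing Implicit Defensive.
Import GRing.Theory Num.Theory.
Local Open Scope classical_set_scope.
Local Open Scope ring_scope.

(** * Graphs
  A graph is given by a vertex type [V], an edge type [E] and endpoint maps
  [src tgt : E -> V] (each edge carries an arbitrary orientation, which plays
  no role).  [simple_graph] forbids loops and parallel edges. *)

Definition links {V E : Type} (src tgt : E -> V) (e : E) (u v : V) : Prop :=
  (src e = u /\ tgt e = v) \/ (src e = v /\ tgt e = u).

Definition simple_graph {V E : Type} (src tgt : E -> V) : Prop :=
  (forall e, src e <> tgt e) /\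
  (forall e e', links src tgt e (src e') (tgt e') -> e = e').

Definition locally_finite {V E : Type} (src tgt : E -> V) : Prop :=
  forall v : V, finite_set [set e | src e = v \/ tgt e = v].

(** [reach okE okV u v]: there is a path from [u] to [v] all of whose edges
    satisfy [okE] and all of whose vertices (including both endpoints, unless
    [u = v] and the path is trivial) satisfy [okV]. *)
Definition reach {V E : Type} (src tgt : E -> V) (okE : E -> Prop)
  (okV : V -> Prop) : relation V :=
  clos_refl_trans V (fun u w => okV u /\ okV w /\
                                 exists e, okE e /\ links src tgt e u w).

Definition connected_graph {V E : Type} (src tgt : E -> V) : Prop :=
  forall u v : V, reach src tgt (fun _ => True) (fun _ => True) u v.

Definition infinite_graph {V : Type} : Prop := ~ finite_set [set: V].

Fixpoint walk_le {V E : Type} (src tgt : E -> V) (n : nat) (u v : V) : Prop :=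
  match n with
  | 0 => u = v
  | n'.+1 => u = v \/ exists w e, links src tgt e u w /\ walk_le src tgt n' w v
  end.

(** Configurations: [omega e = true] means that [e] is open. *)
Definition config (E : Type) := E -> bool.

Definition cylinders (E : Type) : set (set (config E)) :=
  [set A | exists e : E, A = [set w : config E | w e = true]].

Definition Omega (E : Type) := g_sigma_algebraType (@cylinders E).

(** [P] is Bernoulli(p) bond percolation: the states of distinct edges are
    independent and each edge is open with probability [p]; this determines the
    product measure on the product sigma-algebra. *)
Definition bernoulli_percolation {R : realType} {E : choiceType} (p : R)
  (P : probability (Omega E) R) : Prop :=
  forall (F : seq E) (a : E -> bool), uniq F ->
    P [set w : Omega E | forall e, e \in F -> w e = a e] =
    (\prod_(e <- F) (if a e then p else 1 - p))%:E.

Definition open_reach_V {V E : Type} (src tgt : E -> V) (w : config E)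
  (S : set V) (u v : V) : Prop :=
  reach src tgt (fun e => w e = true) (fun z => ~ S z) u v.

Definition open_reach_E {V E : Type} (src tgt : E -> V) (w : config E)
  (S : set E) (u v : V) : Prop :=
  reach src tgt (fun e => w e = true /\ ~ S e) (fun _ => True) u v.

(** [x <-> infinity]: the open cluster of [x] has infinite diameter, i.e. it
    is not contained in any ball B_G(x, n). *)
Definition conn_inf {V E : Type} (src tgt : E -> V) (x : V) : set (config E) :=
  [set w | forall n : nat, exists y, open_reach_V src tgt w set0 x y /\
                                   ~ walk_le src tgt n x y].

Definition vertex_cutset {V E : Type} (src tgt : E -> V) (x : V) (Pi : set V)
  : Prop :=
  finite_set [set y | reach src tgt (fun _ => True) (fun z => ~ Pi z) x y].

Definition edge_cutset {V E : Type} (src tgt : E -> V) (x : V) (Pi : set E)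
  : Prop :=
  finite_set [set y | reach src tgt (fun e => ~ Pi e) (fun _ => True) x y].

Definition A_V {V E : Type} (src tgt : E -> V) (x v : V) (Pi : set V)
  : set (config E) :=
  [set w | open_reach_V src tgt w (Pi `\ v) x v].

Definition A_E {V E : Type} (src tgt : E -> V) (x : V) (e : E) (Pi : set E)
  : set (config E) :=
  [set w | w e = true /\
     (open_reach_E src tgt w (Pi `\ e) x (src e) \/
      open_reach_E src tgt w (Pi `\ e) x (tgt e))].

Section Crit.
Context {R : realType} {V E : choiceType} (src tgt : E -> V) (x : V)
  (Pf : R -> probability (Omega E) R).

Definition p_c : R :=
  sup [set p : R | 0 <= p <= 1 /\ Pf p (conn_inf src tgt x : set (Omega E)) = 0%E].

Definition p'_cut_V : R :=
  sup [set p : R | 0 <= p <= 1 /\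
    ereal_inf [set s | exists Pi : set V, vertex_cutset src tgt x Pi /\
        s = (\esum_(v in Pi) Pf p (A_V src tgt x v Pi : set (Omega E)))%E]
    = 0%E].

Definition p'_cut_E : R :=
  sup [set p : R | 0 <= p <= 1 /\
    ereal_inf [set s | exists Pi : set E, edge_cutset src tgt x Pi /\
        s = (\esum_(e in Pi) Pf p (A_E src tgt x e Pi : set (Omega E)))%E]
    = 0%E].
End Crit.

From Stdlib Require Import Relations.
From mathcomp Require Import all_boot all_algebra.
From mathcomp Require Import all_classical all_reals all_analysis.
From mathcomp Require Import finmap ring lra.
From mathcomp.real_closed Require Import polyrcf.
Set Implicit Arguments. Unset Strict Implicit. Unset Printing Implicit Defensive.
Import order.Order.TTheory GRing.Theory Num.Theory.
Local Open Scope classical_set_scope.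
Local Open Scope ring_scope.

(* The argument is that of Duminil-Copin and Tassion.  Every cutset sum
   dominates P_p(x <-> oo): an infinite open path from x must cross the cutset,
   and a union bound over the first crossing gives the inequality, so
   p'_cut <= p_c.  Conversely, for a finite set S containing x, the edge
   boundary of S and the outer vertex boundary of S are cutsets whose sums are
   at most phi_p(S), the expected number of boundary edges of S joined to x
   inside S.  If all cutset sums were at least d > 0 at some p < p_c, then, by
   Russo's formula and the independence of the event "the set of vertices of a
   box not joined to its complement is S" from the edges inside S, the
   probability theta_n(q) that x is joined to the complement of the ball B_n
   would satisfy theta_n' >= d (1 - theta_n) on [p, 1], whence
   theta_n(q) >= min(1/2, d (q - p) / 2) for every n; so P_q(x <-> oo) > 0 for
   p < q < p_c, a contradiction.  Expectations of events that depend on finitely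
   many edges are polynomials in p, which gives Russo's formula by formal
   differentiation. *)

Lemma indic_in {T : Type} {R : pzRingType} (A : set T) t : A t -> \1_A t = 1 :> R.
Proof. by move=> At; rewrite indicE mem_set. Qed.

Lemma indic_notin {T : Type} {R : pzRingType} (A : set T) t : ~ A t -> \1_A t = 0 :> R.
Proof. by move=> nAt; rewrite indicE memNset. Qed.

Lemma indic_ge0 {T : Type} {R : numDomainType} (A : set T) t : 0 <= \1_A t :> R.
Proof. by rewrite indicE ler0n. Qed.

Lemma uniq_sum_eq_le1 (R : numDomainType) (T : eqType) (s : seq T) (a : T) :
  uniq s -> \sum_(z <- s) ((z == a)%:R : R) <= 1.
Proof.
move=> us; rewrite -natr_sum lern1.
have -> : (\sum_(z <- s) (z == a) = count_mem a s)%N.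
  by rewrite -sum1_count [RHS]big_mkcond; apply: eq_bigr => z _ /=; case: (_ == _).
by rewrite count_uniq_mem ?leq_b1.
Qed.

Lemma measure_le_esum_cover (d : measure_display) (T : measurableType d) (R : realType)
    (mu : {measure set T -> \bar R}) (I : choiceType) (Pi K : set I)
    (B : I -> set T) (A : set T) :
  finite_set K -> K `<=` Pi -> (forall i, K i -> measurable (B i)) -> measurable A ->
  A `<=` \bigcup_(i in K) B i -> (mu A <= \esum_(i in Pi) mu (B i))%E.
Proof.
move=> Kfin KPi mB mA AB; apply: esum_ge; exists K => //.
rewrite fsbig_finite //=; set s := enum_fset (fset_set K).
have sK i : i \in s -> K i by rewrite in_fset_set ?in_setE.
pose F k := nth set0 [seq B i | i <- s] k.
have -> : (\sum_(i <- s) mu (B i) = \sum_(k < size s) mu (F k))%E.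
  by rewrite -(big_map B predT mu) (big_nth set0) size_map big_mkord.
apply: content_subadditive => //.
  move=> k /= ks; have /mapP[i iS ->] : F k \in [seq B i | i <- s].
    by apply: mem_nth; rewrite size_map.
  exact/mB/sK.
move=> t /AB [i Ki Bit].
have iS : i \in s by rewrite in_fset_set ?in_setE.
apply: (@bigsetU_sup _ (index i s)); first by rewrite index_mem.
by rewrite /F (nth_map i) ?index_mem // nth_index.
Qed.

Lemma sup_unit_interval (R : realType) (A : set R) : (forall a, A a -> 0 <= a <= 1) ->
  (forall a, A a -> a <= sup A) /\ 0 <= sup A <= 1.
Proof.
move=> hA; have ubA : has_ubound A by exists 1 => a /hA /andP[].
split=> [a Aa|]; first exact: ub_le_sup.
have [[a Aa]|nA] := pselect (exists a, A a); last first.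
  have -> : A = set0 by apply/seteqP; split => // a Aa; apply: nA; exists a.
  by rewrite sup0 ler01 lexx.
have /andP[a0 a1] := hA a Aa; rewrite (le_trans a0) ?ub_le_sup //.
by apply: ge_sup; [exists a | move=> b /hA /andP[]].
Qed.

Lemma sup_eq_of_dense_sub (R : realType) (X C : set R) :
  (forall a, C a -> 0 <= a <= 1) -> X `<=` C ->
  (forall p, 0 <= p -> p < sup C -> X p) -> sup X = sup C.
Proof.
move=> hC XC hX.
have [ubC /andP[C0 _]] := sup_unit_interval hC.
have [ubX /andP[X0 _]] : (forall a, X a -> a <= sup X) /\ 0 <= sup X <= 1.
  by apply: sup_unit_interval => a /XC /hC.
apply/eqP; rewrite eq_le; apply/andP; split.
  have [[a Xa]|nX] := pselect (exists a, X a); last first.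
    have -> : X = set0 by apply/seteqP; split => // a Xa; apply: nX; exists a.
    by rewrite sup0.
  by apply: ge_sup; [exists a | move=> b /XC /ubC].
rewrite leNgt; apply/negP => lt.
have : X ((sup X + sup C) / 2) by apply: hX; lra.
by move/ubX; lra.
Qed.

Lemma ereal_inf_gt0 (R : realType) (T : set (\bar R)) : (forall s, T s -> (0 <= s)%E) ->
  ereal_inf T != 0%E -> exists2 d : R, 0 < d & forall s, T s -> (d%:E <= s)%E.
Proof.
move=> h0 hne.
have i0 : (0 <= ereal_inf T)%E by apply: le_ereal_inf_tmp => s /h0.
have lb s : T s -> (ereal_inf T <= s)%E by exact: ereal_inf_lbound.
move: hne i0 lb; case: (ereal_inf T) => [r| |] // rn r0 lb.
  by exists r => [|s /lb]; first by rewrite lt_def rn -lee_fin.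
by exists 1 => // s /lb; apply: le_trans; exact: leey.
Qed.

(** * Bernoulli expectations as polynomials in the parameter *)

Section FiniteExpectation.
Variables (R : rcfType) (E : eqType).
Implicit Types (F : seq E) (X Y : (E -> bool) -> R) (w : E -> bool).

Definition cfg_set w e (b : bool) : E -> bool :=
  fun e' => if e' == e then b else w e'.

Definition all_closed : E -> bool := fun _ => false.

(* [expectP F X] is the expectation of [X] when the edges of [F] are
   independently open with probability 'X and all other edges are closed;
   it is a polynomial in the parameter. *)
Fixpoint expectP F X : {poly R} :=
  match F with
  | [::] => (X all_closed)%:P
  | e :: F' => 'X * expectP F' (fun w => X (cfg_set w e true))
               + (1 - 'X) * expectP F' (fun w => X (cfg_set w e false))
  end.

Definition expect (p : R) F X := (expectP F X).[p].

Lemma expect_nil p X : expect p [::] X = X all_closed.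
Proof. by rewrite /expect /= hornerC. Qed.

Lemma expect_cons p e F X : expect p (e :: F) X =
  p * expect p F (fun w => X (cfg_set w e true))
  + (1 - p) * expect p F (fun w => X (cfg_set w e false)).
Proof. by rewrite /expect /= !hornerE. Qed.

Lemma cfg_set_set w e b b' : cfg_set (cfg_set w e b) e b' = cfg_set w e b'.
Proof. by apply: funext => e'; rewrite /cfg_set; case: eqP. Qed.

Lemma cfg_setC w e e' b b' : e != e' ->
  cfg_set (cfg_set w e b) e' b' = cfg_set (cfg_set w e' b') e b.
Proof.
move=> ne; apply: funext => z; rewrite /cfg_set.
case: (eqVneq z e') => [ze'|_]; case: (eqVneq z e) => [ze|_] //.
by move: ne; rewrite -ze -ze' eqxx.
Qed.

Lemma cfg_set_id w e : cfg_set w e (w e) = w.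
Proof. by apply: funext => z; rewrite /cfg_set; case: eqP => [->|]. Qed.

Lemma cfg_set_true_ge w e e' : w e' -> cfg_set w e true e'.
Proof. by rewrite /cfg_set; case: eqP. Qed.

Lemma cfg_set_false_le w e e' : cfg_set w e false e' -> w e'.
Proof. by rewrite /cfg_set; case: eqP. Qed.

Lemma eq_expectP F X Y : X =1 Y -> expectP F X = expectP F Y.
Proof. by move=> h; congr expectP; apply: funext. Qed.

Lemma expectPD F X Y : expectP F (X \+ Y) = expectP F X + expectP F Y.
Proof.
elim: F X Y => [|e F IH] X Y /=; first by rewrite polyCD.
by rewrite !IH; ring.
Qed.

Lemma expectPZ F c X : expectP F (fun w => c * X w) = c%:P * expectP F X.
Proof.
elim: F X => [|e F IH] X /=; first by rewrite polyCM.
by rewrite !IH; ring.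
Qed.

Lemma expectPB F X Y : expectP F (X \- Y) = expectP F X - expectP F Y.
Proof.
have -> : expectP F (X \- Y) = expectP F (X \+ (fun w => -1 * Y w)).
  by apply: eq_expectP => w; rewrite /= mulN1r.
by rewrite expectPD expectPZ polyCN mulN1r.
Qed.

Lemma expectP_cst F c : expectP F (fun _ => c) = c%:P.
Proof. by elim: F => [|e F IH] //=; rewrite IH; ring. Qed.

Lemma eq_expect p F X Y : X =1 Y -> expect p F X = expect p F Y.
Proof. by move=> h; rewrite /expect (eq_expectP _ h). Qed.

Lemma expectD p F X Y : expect p F (X \+ Y) = expect p F X + expect p F Y.
Proof. by rewrite /expect expectPD hornerD. Qed.

Lemma expectZ p F c X : expect p F (fun w => c * X w) = c * expect p F X.
Proof. by rewrite /expect expectPZ hornerM hornerC. Qed.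

Lemma expectB p F X Y : expect p F (X \- Y) = expect p F X - expect p F Y.
Proof. by rewrite /expect expectPB hornerD hornerN. Qed.

Lemma expect_cst p F c : expect p F (fun _ => c) = c.
Proof. by rewrite /expect expectP_cst hornerC. Qed.

Lemma expect_sum p F (I : Type) (s : seq I) (f : I -> (E -> bool) -> R) :
  expect p F (fun w => \sum_(i <- s) f i w) = \sum_(i <- s) expect p F (f i).
Proof.
elim: s => [|i s IH].
  by rewrite big_nil -[RHS](expect_cst p F); apply: eq_expect => w; rewrite big_nil.
by rewrite big_cons -IH -expectD; apply: eq_expect => w; rewrite big_cons.
Qed.

Section UnitInterval.
Variable p : R.
Hypothesis p01 : 0 <= p <= 1.

Lemma expect_ge0 F X : (forall w, 0 <= X w) -> 0 <= expect p F X.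
Proof.
case/andP: p01 => p0 p1.
elim: F X => [|e F IH] X hX; first by rewrite expect_nil.
by rewrite expect_cons addr_ge0 // mulr_ge0 ?IH ?subr_ge0.
Qed.

Lemma ler_expect F X Y : (forall w, X w <= Y w) -> expect p F X <= expect p F Y.
Proof.
by move=> h; rewrite -subr_ge0 -expectB; apply: expect_ge0 => w; rewrite subr_ge0.
Qed.

End UnitInterval.

Definition fun_depends_on (D : E -> Prop) X :=
  forall w w', (forall e, D e -> w e = w' e) -> X w = X w'.

Lemma fun_depends_on_set D X e b :
  fun_depends_on D X -> fun_depends_on D (fun w => X (cfg_set w e b)).
Proof.
move=> dX w w' h; apply: dX => z Dz; rewrite /cfg_set; case: eqP => // _; exact: h.
Qed.

Lemma fun_depends_on_set_out D X e b w :
  fun_depends_on D X -> ~ D e -> X (cfg_set w e b) = X w.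
Proof.
move=> dX nD; apply: dX => z Dz; rewrite /cfg_set; case: eqP => // ze.
by case: nD; rewrite -ze.
Qed.

Lemma expectM_indep p F D1 D2 X Y :
  fun_depends_on D1 X -> fun_depends_on D2 Y -> (forall e, D1 e -> ~ D2 e) ->
  expect p F (fun w => X w * Y w) = expect p F X * expect p F Y.
Proof.
move=> + + disj; elim: F X Y => [|e F IH] X Y dX dY; first by rewrite !expect_nil.
rewrite !expect_cons.
have [D1e|nD1e] := pselect (D1 e).
  have nD2 := disj _ D1e.
  have eY b : expect p F (fun w => Y (cfg_set w e b)) = expect p F Y.
    by apply: eq_expect => w; rewrite (fun_depends_on_set_out _ _ dY nD2).
  have eXY b : expect p F (fun w => X (cfg_set w e b) * Y (cfg_set w e b)) =
               expect p F (fun w => X (cfg_set w e b) * Y w).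
    by apply: eq_expect => w; rewrite /= (fun_depends_on_set_out _ _ dY nD2).
  by rewrite !eXY !eY !IH //; try exact: fun_depends_on_set; ring.
have eX b : expect p F (fun w => X (cfg_set w e b)) = expect p F X.
  by apply: eq_expect => w; rewrite (fun_depends_on_set_out _ _ dX nD1e).
have eXY b : expect p F (fun w => X (cfg_set w e b) * Y (cfg_set w e b)) =
             expect p F (fun w => X w * Y (cfg_set w e b)).
  by apply: eq_expect => w; rewrite /= (fun_depends_on_set_out _ _ dX nD1e).
by rewrite !eXY !eX !IH //; try exact: fun_depends_on_set; ring.
Qed.

Definition edge_diff e X : (E -> bool) -> R :=
  fun w => X (cfg_set w e true) - X (cfg_set w e false).

Lemma russo F X : uniq F ->
  (expectP F X)^`() = \sum_(e <- F) expectP F (edge_diff e X).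
Proof.
elim: F X => [|e F IH] X /=; first by rewrite derivC big_nil.
move=> /andP[eF uF].
rewrite big_cons derivD !derivM derivB derivX derivC !IH //.
have diff_e b : expectP F (fun w => edge_diff e X (cfg_set w e b)) =
    expectP F (edge_diff e X).
  by apply: eq_expectP => w; rewrite /edge_diff !cfg_set_set.
rewrite !diff_e expectPB.
have -> : \sum_(j <- F) ('X * expectP F (fun w => edge_diff j X (cfg_set w e true)) +
      (1 - 'X) * expectP F (fun w => edge_diff j X (cfg_set w e false))) =
   'X * \sum_(j <- F) expectP F (edge_diff j (fun w => X (cfg_set w e true))) +
   (1 - 'X) * \sum_(j <- F) expectP F (edge_diff j (fun w => X (cfg_set w e false))).
  rewrite !mulr_sumr -big_split /=; apply: eq_big_seq => j jF.
  have ej : e != j by apply: contraNneq eF => ->.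
  by congr (_ * _ + _ * _); apply: eq_expectP => w; rewrite /edge_diff !(cfg_setC _ _ _ ej).
ring.
Qed.

Definition increasing_cfg X :=
  forall w w' : E -> bool, (forall e, w e -> w' e) -> X w <= X w'.

Lemma edge_diff_ge0 e X w : increasing_cfg X -> 0 <= edge_diff e X w.
Proof.
by move=> hX; rewrite subr_ge0; apply: hX => z /cfg_set_false_le; exact: cfg_set_true_ge.
Qed.

Lemma expect_le_p F X p q : uniq F -> increasing_cfg X ->
  0 <= p -> p <= q -> q <= 1 -> expect p F X <= expect q F X.
Proof.
move=> uF hX p0 pq q1; apply: (@ler_hornerW _ 0 1) => //; rewrite ?in_itv /=.
- move=> y; rewrite in_itv /= => /andP[y0 y1].
  rewrite russo // horner_sum sumr_ge0 // => e _.
  by apply: expect_ge0 => [|w]; [rewrite !ltW | exact: edge_diff_ge0].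
- by rewrite p0 (le_trans pq).
- by rewrite q1 (le_trans p0).
Qed.

Lemma increasing_indic (A : set (E -> bool)) :
  (forall w w' : E -> bool, (forall e, w e -> w' e) -> A w -> A w') ->
  increasing_cfg (\1_A : _ -> R).
Proof.
move=> hA w w' hw; rewrite !indicE.
by have [/set_mem/(hA _ _ hw)/mem_set ->|] := boolP (w \in A); rewrite ?ler0n.
Qed.

Lemma indic_depends_on D (A : set (E -> bool)) :
  (forall w w', (forall e, D e -> w e = w' e) -> A w -> A w') ->
  fun_depends_on D (\1_A : _ -> R).
Proof.
move=> hA w w' h; rewrite !indicE.
suff -> : (w \in A) = (w' \in A) by [].
by apply/idP/idP => /set_mem hw; apply/mem_set; apply: hA hw => e /h ->.
Qed.

End FiniteExpectation.

Section BernoulliOnCylinders.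
Variables (R : realType) (E : choiceType).
Implicit Types (F G : seq E) (A : set (E -> bool)) (w : E -> bool).

Definition determined_by F A :=
  forall w w', (forall e, e \in F -> w e = w' e) -> A w -> A w'.

Definition cylinder G (a : E -> bool) : set (E -> bool) :=
  [set w | forall e, e \in G -> w e = a e].

Lemma cylinder_determined G a : determined_by G (cylinder G a).
Proof. by move=> w w' h hw e eG; rewrite -h // hw. Qed.

Lemma determined_by_nil A : determined_by [::] A -> A = setT \/ A = set0.
Proof.
move=> hA; have [A0|nA0] := pselect (A (@all_closed E)); [left|right].
  by apply/seteqP; split => // w _; exact: hA A0.
by apply/seteqP; split => // w Aw; apply: nA0; exact: hA Aw.
Qed.

Lemma determined_by_set F e b A : determined_by (e :: F) A ->
  determined_by F [set w | A (cfg_set w e b)].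
Proof.
move=> hA w w' h; apply: hA => z; rewrite in_cons /cfg_set.
by case: eqP => //= _; exact: h.
Qed.

Lemma measurable_edge_open e : measurable ([set w | w e = true] : set (Omega E)).
Proof. by apply: sub_sigma_algebra; exists e. Qed.

Lemma split_on_edge e A : A =
  ([set w | A (cfg_set w e true)] `&` [set w | w e = true]) `|`
  ([set w | A (cfg_set w e false)] `&` ~` [set w | w e = true]).
Proof.
apply/seteqP; split => w /=.
  case: (boolP (w e)) => we Aw; [left|right].
    by split => //; rewrite -we cfg_set_id.
  by split => //; rewrite -(negbTE we) cfg_set_id.
case=> [[h we]|[h /negP/negbTE we]]; by rewrite -(cfg_set_id w e) we.
Qed.

Lemma determined_by_measurable F (A : set (Omega E)) :
  determined_by F A -> measurable A.
Proof.
elim: F A => [|e F IH] A hA.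
  by case: (determined_by_nil hA) => ->; [exact: measurableT | exact: measurable0].
rewrite (split_on_edge e A); apply: measurableU; apply: measurableI.
- by apply: IH; apply: determined_by_set.
- exact: measurable_edge_open.
- by apply: IH; apply: determined_by_set.
- by apply: measurableC; exact: measurable_edge_open.
Qed.

Lemma setI_cylinder_cons e G a A : e \notin G ->
  A `&` cylinder G a =
   ([set w | A (cfg_set w e true)] `&` cylinder (e :: G) (cfg_set a e true)) `|`
   ([set w | A (cfg_set w e false)] `&` cylinder (e :: G) (cfg_set a e false)).
Proof.
move=> eG; apply/seteqP; split => w /=.
  move=> [Aw Cw].
  have hC b : w e = b -> cylinder (e :: G) (cfg_set a e b) w.
    move=> we z; rewrite in_cons /cfg_set; case: eqP => [->|_] //= zG; exact: Cw.
  case: (boolP (w e)) => we; [left|right].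
    by split; [rewrite -we cfg_set_id | exact: hC].
  by split; [rewrite -(negbTE we) cfg_set_id | apply: hC; exact: negbTE].
have hC b : cylinder (e :: G) (cfg_set a e b) w -> w e = b /\ cylinder G a w.
  move=> Cw; split; first by rewrite (Cw e) ?mem_head // /cfg_set eqxx.
  move=> z zG; rewrite (Cw z) ?in_cons ?zG ?orbT // /cfg_set.
  by case: eqP => // ze; move: eG; rewrite -ze zG.
by case=> -[h /hC[we Cw]]; split => //; rewrite -(cfg_set_id w e) we.
Qed.

Variables (p : R) (P : probability (Omega E) R).
Hypothesis HP : bernoulli_percolation p P.

(* The cylinder factor makes the induction on [F] go through. *)
Lemma bernoulli_setI_cylinder F A G a : uniq (F ++ G) -> determined_by F A ->
  P (A `&` cylinder G a) =
  (expect p F \1_A * \prod_(e <- G) (if a e then p else 1 - p))%:E.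
Proof.
elim: F A G a => [|e F IH] A G a uFG hA.
  rewrite expect_nil indicE.
  case: (determined_by_nil hA) => ->; last by rewrite set0I measure0 in_set0 mul0r.
  by rewrite setTI in_setT mul1r HP.
have eG : e \notin G.
  by move: uFG; rewrite cat_cons /= mem_cat negb_or => /andP[/andP[]].
have uFeG : uniq (F ++ e :: G) by rewrite -cat1s uniq_catCA.
have prod_cons b : \prod_(z <- e :: G) (if cfg_set a e b z then p else 1 - p) =
   (if b then p else 1 - p) * \prod_(z <- G) (if a z then p else 1 - p).
  rewrite big_cons /cfg_set eqxx; congr (_ * _); apply: eq_big_seq => z zG.
  by case: eqP => // ze; move: eG; rewrite -ze zG.
have mA b : measurable ([set w | A (cfg_set w e b)] `&`
                        cylinder (e :: G) (cfg_set a e b) : set (Omega E)).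
  apply: measurableI; apply: determined_by_measurable.
    exact: determined_by_set hA.
  exact: cylinder_determined.
rewrite (setI_cylinder_cons _ _ eG) measureU //=; last first.
  apply/seteqP; split => // w /= [[_ C1] [_ C0]].
  by move: (C1 e (mem_head _ _)) (C0 e (mem_head _ _)); rewrite /cfg_set eqxx => ->.
rewrite !IH ?prod_cons //; try exact: determined_by_set hA.
by rewrite -EFinD expect_cons; congr EFin; ring.
Qed.

Lemma bernoulli_expect F A : uniq F -> determined_by F A -> P A = (expect p F \1_A)%:E.
Proof.
move=> uF hA; have := @bernoulli_setI_cylinder F A [::] (@all_closed E).
have -> : cylinder [::] (@all_closed E) = setT.
  by apply/seteqP; split => // w _ e; rewrite in_nil.
by rewrite setIT cats0 big_nil mulr1; apply.
Qed.

End BernoulliOnCylinders.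

(** * Paths *)

Section Reach.
Variables (V E : Type) (src tgt : E -> V).
Implicit Types (okE : E -> Prop) (okV : V -> Prop).

Lemma reach_mono okE okE' okV okV' u v :
  (forall e, okE e -> okE' e) -> (forall z, okV z -> okV' z) ->
  reach src tgt okE okV u v -> reach src tgt okE' okV' u v.
Proof.
move=> hE hV; elim=> [a b [ha [hb [e [he hl]]]]|a|a b c _ IH1 _ IH2].
- by apply: rt_step; split; [exact: hV | split; [exact: hV | exists e; split; [exact: hE|]]].
- exact: rt_refl.
- exact: rt_trans IH1 IH2.
Qed.

Lemma reach_step okE okV e u w :
  okV u -> okV w -> okE e -> links src tgt e u w -> reach src tgt okE okV u w.
Proof. by move=> *; apply: rt_step; split => //; split => //; exists e; split. Qed.

Lemma reach_refl okE okV u : reach src tgt okE okV u u.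
Proof. exact: rt_refl. Qed.

Lemma reach_trans okE okV u v w :
  reach src tgt okE okV u v -> reach src tgt okE okV v w -> reach src tgt okE okV u w.
Proof. exact: rt_trans. Qed.

Lemma reach_ind okE okV (Pr : V -> Prop) v :
  Pr v ->
  (forall u w e, okV u -> okV w -> okE e -> links src tgt e u w ->
     reach src tgt okE okV w v -> Pr w -> Pr u) ->
  forall u, reach src tgt okE okV u v -> Pr u.
Proof.
move=> h0 hS u h; apply clos_rt_rt1n in h; move: h0.
induction h as [|a b c [ha [hb [e [he hl]]]] hbc IH] => // h0.
apply: (hS a b e) => //; first exact: clos_rt1n_rt.
exact: IH.
Qed.

Lemma reach_last okE okV u v : reach src tgt okE okV u v -> u = v \/ okV v.
Proof. by move=> h; apply clos_rt_rtn1 in h; case: h => [|a b [_ [hb _]] _]; [left|right]. Qed.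

Lemma links_end e u t : links src tgt e u t -> src e = u \/ tgt e = u.
Proof. by case=> [[hs _]|[_ ht]]; [left|right]. Qed.

Definition inner_edge (S : set V) e := S (src e) /\ S (tgt e).

Definition boundary_edge (S : set V) e :=
  (S (src e) /\ ~ S (tgt e)) \/ (~ S (src e) /\ S (tgt e)).

Definition incident (S : set V) e := S (src e) \/ S (tgt e).

Lemma links_inner S e u t : links src tgt e u t -> S u -> S t -> inner_edge S e.
Proof. by case=> -[<- <-] ? ?; split. Qed.

Lemma links_not_inner S e u t : links src tgt e u t -> ~ S t -> ~ inner_edge S e.
Proof.
by move=> hl nt [s1 s2]; apply: nt; case: hl => -[hs ht]; [rewrite -ht | rewrite -hs].
Qed.

Lemma links_boundary S e u t : links src tgt e u t -> S u -> ~ S t -> boundary_edge S e.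
Proof. by case=> -[<- <-] ? ?; [left|right]. Qed.

Lemma links_incident S e u t : links src tgt e u t -> S u -> incident S e.
Proof. by case=> -[hs ht] Su; [left; rewrite hs | right; rewrite ht]. Qed.

Lemma boundary_incident S e : boundary_edge S e -> incident S e.
Proof. by case=> -[]; [left|right]. Qed.

Lemma reach_inner_closed S okE u v :
  (forall e, okE e -> inner_edge S e) -> S u ->
  reach src tgt okE (fun _ => True) u v -> S v.
Proof.
move=> hE Su h; apply clos_rt_rtn1 in h; elim: h => // a b [_ [_ [e [/hE [s1 s2] hl]]]] _ _.
by case: hl => -[hs ht]; [rewrite -ht | rewrite -hs].
Qed.

End Reach.

Section Walks.
Variables (V E : Type) (src tgt : E -> V).

Lemma walk_le_refl n u : walk_le src tgt n u u.
Proof. by case: n => [|n] //=; left. Qed.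

Lemma walk_leS n u v : walk_le src tgt n u v -> walk_le src tgt n.+1 u v.
Proof.
elim: n u => [|n IH] u /=; first by move=> ->; left.
case=> [->|[w [e [hl hw]]]]; first by left.
by right; exists w, e; split => //; exact: IH.
Qed.

Lemma walk_le_mono m n u v : (m <= n)%N -> walk_le src tgt m u v -> walk_le src tgt n u v.
Proof.
move=> /subnK <- h; elim: (n - m)%N => [|k IH] //; rewrite addSn; exact: walk_leS.
Qed.

Lemma reach_walk_le okE okV u v :
  reach src tgt okE okV u v -> exists n, walk_le src tgt n u v.
Proof.
move: u; apply: reach_ind; first by exists 0%N.
by move=> a b e _ _ _ hl _ [n hn]; exists n.+1; right; exists b, e.
Qed.

Definition neighbours u := [set w | exists e, links src tgt e u w].

Definition graph_ball u n : set V := [set v | walk_le src tgt n u v].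

Lemma graph_ball_center u n : graph_ball u n u.
Proof. exact: walk_le_refl. Qed.

Hypothesis lf : locally_finite src tgt.

Lemma neighbours_finite u : finite_set (neighbours u).
Proof.
apply: (@sub_finite_set _ _ (tgt @` [set e | src e = u \/ tgt e = u] `|`
                             src @` [set e | src e = u \/ tgt e = u])).
  by move=> w [e [[hs ht]|[hs ht]]]; [left|right]; exists e => //; [left|right].
by rewrite finite_setU; split; apply: finite_image; exact: lf.
Qed.

Lemma incident_finite S : finite_set S -> finite_set (incident src tgt S).
Proof.
move=> fS; apply: (@sub_finite_set _ _
  (\bigcup_(v in S) [set e | src e = v \/ tgt e = v])).
  by move=> e [h|h]; [exists (src e) => //; left | exists (tgt e) => //; right].
by apply: bigcup_finite => // v _; exact: lf.
Qed.

Lemma graph_ball_finite u n : finite_set (graph_ball u n).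
Proof.
elim: n u => [|n IH] u /=.
  by apply: (@sub_finite_set _ _ [set u]) => [v /= ->|]; [|exact: finite_set1].
apply: (@sub_finite_set _ _
  ([set u] `|` \bigcup_(w in neighbours u) graph_ball w n)).
  by move=> v /= [->|[w [e [hl hw]]]]; [left | right; exists w => //; exists e].
rewrite finite_setU; split; first exact: finite_set1.
by apply: bigcup_finite; [exact: neighbours_finite | move=> w _; exact: IH].
Qed.

End Walks.

Section Connected.
Variables (V E : choiceType) (src tgt : E -> V).
Hypothesis conn : connected_graph src tgt.

Lemma finite_set_in_ball x (C : set V) : finite_set C ->
  exists N, C `<=` graph_ball src tgt x N.
Proof.
move=> /finite_seqP [s ->]; elim: s => [|y s [N hN]]; first by exists 0%N.
have [n hn] := reach_walk_le (conn x y).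
exists (maxn N n) => z /=; rewrite in_cons => /orP[/eqP ->|zs].
  by apply: walk_le_mono hn; exact: leq_maxr.
by apply: walk_le_mono (hN z zs); exact: leq_maxl.
Qed.

End Connected.

(** * The differential inequality of Duminil-Copin and Tassion *)

Section DuminilCopinTassion.
Variables (R : realType) (V E : choiceType) (src tgt : E -> V) (x : V) (Lam : set V).
Hypotheses (lf : locally_finite src tgt) (Lam_fin : finite_set Lam) (Lam_x : Lam x).
Implicit Types (w : E -> bool) (S : set V).

Definition box_edges : seq E := enum_fset (fset_set (incident src tgt Lam)).

Lemma box_edges_uniq : uniq box_edges.
Proof. exact: fset_uniq. Qed.

Lemma mem_box_edges e : e \in box_edges <-> incident src tgt Lam e.
Proof.
by rewrite /box_edges in_fset_set ?in_setE //; exact: incident_finite.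
Qed.

Lemma links_box_edge e u t : links src tgt e u t -> Lam u -> e \in box_edges.
Proof. by move=> hl Lu; apply/mem_box_edges; exact: links_incident hl Lu. Qed.

Definition box_reach w :=
  reach src tgt (fun e => w e = true /\ e \in box_edges) (fun _ => True).

Definition exits w z := exists y, ~ Lam y /\ box_reach w z y.

Definition unexited w : set V := [set z | Lam z /\ ~ exits w z].

Definition inner_reach S w :=
  reach src tgt (fun e => w e = true /\ inner_edge src tgt S e) (fun _ => True).

Definition reaches_edge_in S e : set (E -> bool) :=
  [set w | inner_reach S w x (src e) \/ inner_reach S w x (tgt e)].

Definition exit_event : set (E -> bool) := [set w | exits w x].

Definition unexited_is S : set (E -> bool) :=
  [set w | unexited w = S /\ ~ exits w x].

Definition pivotal e : set (E -> bool) :=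
  [set w | ~ exits w x /\ exits (cfg_set w e true) x].

Definition theta (p : R) := expect p box_edges \1_exit_event.

Definition phi (p : R) S := \sum_(e <- box_edges)
  \1_(boundary_edge src tgt S) e * expect p box_edges \1_(reaches_edge_in S e).

Lemma box_reach_mono w w' u v :
  (forall e, w e -> w' e) -> box_reach w u v -> box_reach w' u v.
Proof.
by move=> h; apply: reach_mono => // e [we eF]; split => //; apply: h; rewrite we.
Qed.

Lemma exits_mono w w' z : (forall e, w e -> w' e) -> exits w z -> exits w' z.
Proof. by move=> h [y [ny c]]; exists y; split => //; exact: box_reach_mono c. Qed.

Lemma exits_step w e u t : w e = true -> links src tgt e u t -> Lam u ->
  exits w t -> exits w u.
Proof.
move=> we hl Lu [y [ny cy]]; have eF := links_box_edge hl Lu.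
by exists y; split => //; apply: reach_trans cy; exact: reach_step hl.
Qed.

Lemma exits_edge w e u t : w e = true -> links src tgt e u t -> Lam u ->
  ~ unexited w t -> exits w u.
Proof.
move=> we hl Lu nt; have [Lt|nLt] := pselect (Lam t).
  by apply: exits_step we hl Lu _; apply: contrapT => nCt; apply: nt.
have eF := links_box_edge hl Lu.
by exists t; split => //; exact: reach_step hl.
Qed.

Lemma pivotal_of_boundary_reach w e : ~ exits w x ->
  boundary_edge src tgt (unexited w) e -> reaches_edge_in (unexited w) e w ->
  exits (cfg_set w e true) x.
Proof.
move=> nC hB hY; set S := unexited w.
have xS : S x by split.
have inS u : inner_reach S w x u -> S u.
  by apply: reach_inner_closed => // e' [].
have key t z : S t -> ~ S z -> links src tgt e t z -> inner_reach S w x t ->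
    exits (cfg_set w e true) x.
  move=> St nSz hl hc.
  have ht : box_reach (cfg_set w e true) x t.
    apply: reach_mono hc => // e' [we' [s1 s2]]; split; first exact: cfg_set_true_ge.
    by apply/mem_box_edges; left; case: s1.
  have [y [ny cy]] : exits (cfg_set w e true) t.
    apply: (exits_edge _ hl St.1); first by rewrite /cfg_set eqxx.
    move=> [Lz nCz]; apply: nSz; split => // hz; apply: nCz.
    by apply: exits_mono hz => e'; exact: cfg_set_true_ge.
  by exists y; split => //; exact: reach_trans ht cy.
case: hY => /[dup] /inS St hc; case: hB => -[h1 h2] //.
  by apply: (key _ _ St h2 _ hc); left.
by apply: (key _ _ St h1 _ hc); right.
Qed.

Section UnexitedLocal.
Variables w w' : E -> bool.
Hypothesis ww' : forall e, ~ inner_edge src tgt (unexited w) e -> w e = w' e.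

Lemma exits_local z : exits w z -> exits w' z.
Proof.
move=> [y [ny cy]]; move: z cy.
apply: reach_ind; first by exists y; split => //; exact: reach_refl.
move=> u t e _ _ [we eF] hl cty [y' [ny' cy']].
have nSt : ~ unexited w t by move=> [_]; apply; exists y.
have we' : w' e = true by rewrite -ww' //; exact: links_not_inner hl nSt.
by exists y'; split => //; apply: reach_trans cy'; exact: reach_step hl.
Qed.

Lemma unexited_not_exits_local z : unexited w z -> ~ exits w' z.
Proof.
move=> Sz [y [ny cy]].
have : unexited w z -> exists e u t, w' e = true /\ links src tgt e u t /\
    unexited w u /\ ~ unexited w t.
  move: z cy {Sz}; apply: reach_ind; first by move=> [].
  move=> u t e _ _ [we' _] hl _ IH Su.
  have [St|nSt] := pselect (unexited w t); first exact: IH.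
  by exists e, u, t.
case=> // e [u [t [we' [hl [[Lu nCu] nSt]]]]].
have we : w e = true by rewrite ww' //; exact: links_not_inner hl nSt.
exact/nCu/(exits_edge we hl Lu nSt).
Qed.

Lemma unexited_local : unexited w' = unexited w.
Proof.
apply/seteqP; split => z [Lz nC]; split => //.
  by move=> /exits_local.
exact: unexited_not_exits_local.
Qed.

End UnexitedLocal.

Lemma unexited_is_depends S :
  fun_depends_on (fun e => ~ inner_edge src tgt S e) (\1_(unexited_is S) : _ -> R).
Proof.
apply: indic_depends_on => w w' h [hS hC]; rewrite -hS in h.
have hS' := unexited_local h; split; first by rewrite hS' hS.
by have [] : unexited w' x by rewrite hS'.
Qed.

Lemma reaches_edge_in_depends S e :
  fun_depends_on (inner_edge src tgt S) (\1_(reaches_edge_in S e) : _ -> R).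
Proof.
apply: indic_depends_on => w w' h hY.
have M u v : inner_reach S w u v -> inner_reach S w' u v.
  by apply: reach_mono => // e' [we' hi]; split => //; rewrite -h.
by case: hY => hc; [left|right]; exact: M.
Qed.

Lemma exit_event_increasing : increasing_cfg (\1_exit_event : _ -> R).
Proof. by apply: increasing_indic => w w' h; exact: exits_mono. Qed.

Lemma reaches_edge_in_increasing S e :
  increasing_cfg (\1_(reaches_edge_in S e) : _ -> R).
Proof.
apply: increasing_indic => w w' h [hc|hc]; [left|right];
  by apply: reach_mono hc => // e' [we hi]; split => //; apply: h; rewrite we.
Qed.

Local Notation box := (fset_set Lam).

(* Subsets of the box are enumerated by the finite type [{set box}]. *)

Definition subset_of (B : {set box}) : set V :=
  [set v | exists2 u : box, u \in B & val u = v].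

Definition unexited_code w : {set box} := [set u | `[< unexited w (val u) >]].

Lemma subset_of_sub B : subset_of B `<=` Lam.
Proof.
by move=> _ [u _ <-]; have := fsvalP u; rewrite in_fset_set // in_setE.
Qed.

Lemma subset_of_inj : injective subset_of.
Proof.
have H B B' : subset_of B = subset_of B' -> {subset B <= B'}.
  move=> hB u uB; have : subset_of B' (val u) by rewrite -hB; exists u.
  by case=> u' u'B' /val_inj <-.
by move=> B B' hB; apply/setP => u; apply/idP/idP; [exact: H hB u | exact: H (esym hB) u].
Qed.

Lemma subset_of_code w : subset_of (unexited_code w) = unexited w.
Proof.
apply/seteqP; split => [_ [u + <-]|v Sv]; first by rewrite inE => /asboolP.
have vL : v \in box by rewrite in_fset_set // in_setE; exact: Sv.1.
by exists (FSetSub vL) => //; rewrite inE; apply/asboolP.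
Qed.

Lemma sum_unexited_is w : \sum_(B : {set box}) \1_(unexited_is (subset_of B)) w =
  \1_(~` exit_event) w :> R.
Proof.
rewrite (bigD1 (unexited_code w)) //= big1 ?addr0.
  rewrite subset_of_code !indicE.
  suff -> : (w \in unexited_is (unexited w)) = (w \in ~` exit_event) by [].
  by apply/idP/idP => /set_mem h; apply/mem_set; [case: h | split].
move=> B nB; apply: indic_notin => -[hS _]; move/eqP: nB; apply.
by apply: subset_of_inj; rewrite subset_of_code hS.
Qed.

Lemma pivotal_le_edge_diff e w : \1_(pivotal e) w <= edge_diff e \1_exit_event w :> R.
Proof.
have [hP|nP] := pselect (pivotal e w); last first.
  by rewrite indic_notin //; exact: edge_diff_ge0 exit_event_increasing.
case: (hP) => nC C1; rewrite indic_in // /edge_diff indic_in // indic_notin ?subr0 //.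
by move=> h; apply: nC; apply: exits_mono h => e'; exact: cfg_set_false_le.
Qed.

Lemma sum_le_pivotal w e :
  \sum_(B : {set box}) \1_(boundary_edge src tgt (subset_of B)) e *
     (\1_(unexited_is (subset_of B)) w * \1_(reaches_edge_in (subset_of B) e) w)
  <= \1_(pivotal e) w :> R.
Proof.
rewrite (bigD1 (unexited_code w)) //= big1 ?addr0; last first.
  move=> B nB; rewrite [X in _ * (X * _)]indic_notin ?mul0r ?mulr0 // => -[hS _].
  by move/eqP: nB; apply; apply: subset_of_inj; rewrite subset_of_code hS.
rewrite subset_of_code.
have [hB|nB] := pselect (boundary_edge src tgt (unexited w) e); last first.
  by rewrite (indic_notin nB) mul0r indic_ge0.
have [hX|nX] := pselect (unexited_is (unexited w) w); last first.
  by rewrite (indic_notin nX) mul0r mulr0 indic_ge0.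
have [hY|nY] := pselect (reaches_edge_in (unexited w) e w); last first.
  by rewrite (indic_notin nY) !mulr0 indic_ge0.
rewrite !indic_in ?mulr1 //; split; first exact: hX.2.
exact: pivotal_of_boundary_reach hX.2 hB hY.
Qed.

Lemma phi_le_p p q S : 0 <= p -> p <= q -> q <= 1 -> phi p S <= phi q S.
Proof.
move=> p0 pq q1; apply: ler_sum => e _; apply: ler_wpM2l; first exact: indic_ge0.
by apply: expect_le_p => //; [exact: box_edges_uniq | exact: reaches_edge_in_increasing].
Qed.

(* Russo's formula; an edge of the boundary of the unexited set that is reached
   from [x] inside that set is pivotal, and [unexited_is S] is independent of
   the edges inside [S]. *)
Lemma theta_deriv_ge_sum r : 0 <= r <= 1 ->
  \sum_(B : {set box})
    expect r box_edges \1_(unexited_is (subset_of B)) * phi r (subset_of B)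
  <= (expectP box_edges \1_exit_event)^`().[r].
Proof.
move=> r01; rewrite russo ?box_edges_uniq // horner_sum.
apply: le_trans (_ : \sum_(e <- box_edges) expect r box_edges \1_(pivotal e) <= _);
  last by apply: ler_sum => e _; apply: ler_expect => // w; exact: pivotal_le_edge_diff.
apply: le_trans (_ : \sum_(e <- box_edges) expect r box_edges (fun w =>
    \sum_(B : {set box}) \1_(boundary_edge src tgt (subset_of B)) e *
     (\1_(unexited_is (subset_of B)) w * \1_(reaches_edge_in (subset_of B) e) w)) <= _);
  last by apply: ler_sum => e _; apply: ler_expect => // w; exact: sum_le_pivotal.
under [X in _ <= X]eq_bigr do rewrite expect_sum.
under [X in _ <= X]eq_bigr do under eq_bigr do rewrite expectZ (expectM_indep _ _
  (@unexited_is_depends _) (@reaches_edge_in_depends _ _)) //.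
rewrite exchange_big /=; apply: ler_sum => B _; rewrite /phi mulr_sumr.
by apply: ler_sum => e _; rewrite mulrCA lexx.
Qed.

Lemma one_sub_theta r : 1 - theta r =
  \sum_(B : {set box}) expect r box_edges \1_(unexited_is (subset_of B)).
Proof.
rewrite -expect_sum (eq_expect _ _ sum_unexited_is) /theta -[1](expect_cst r box_edges).
rewrite -expectB; apply: eq_expect => w; rewrite /= !indicE in_setC.
by case: (_ \in _); rewrite ?subrr ?subr0.
Qed.

Lemma theta_deriv_ge p r (d : R) : 0 <= p -> p <= r -> r <= 1 -> 0 <= d ->
  (forall S, S `<=` Lam -> S x -> d <= phi p S) ->
  d * (1 - theta r) <= (expectP box_edges \1_exit_event)^`().[r].
Proof.
move=> p0 pr r1 d0 Hd; have r01 : 0 <= r <= 1 by rewrite (le_trans p0 pr) r1.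
apply: le_trans (theta_deriv_ge_sum r01).
rewrite one_sub_theta mulr_sumr; apply: ler_sum => B _; rewrite mulrC.
have [xS|nxS] := pselect (subset_of B x).
  apply: ler_wpM2l; first by apply: expect_ge0 => // w; exact: indic_ge0.
  exact: le_trans (Hd _ (@subset_of_sub B) xS) (phi_le_p _ p0 pr r1).
have -> : expect r box_edges \1_(unexited_is (subset_of B)) = 0.
  rewrite -(expect_cst r box_edges 0); apply: eq_expect => w.
  by apply: indic_notin => -[hS hC]; apply: nxS; rewrite -hS.
by rewrite !mul0r.
Qed.

(* Integrating [theta_deriv_ge]: either [theta] reaches 1/2 before [q], or its
   derivative stays above [d / 2] on [[p, q]]. *)
Lemma theta_ge p q (d : R) : 0 <= p -> p < q -> q <= 1 -> 0 < d ->
  (forall S, S `<=` Lam -> S x -> d <= phi p S) ->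
  Num.min (2^-1) (d * (q - p) / 2) <= theta q.
Proof.
move=> p0 pq q1 d0 Hd.
have theta_mono r r' : 0 <= r -> r <= r' -> r' <= 1 -> theta r <= theta r'.
  by move=> *; apply: expect_le_p => //; [exact: box_edges_uniq | exact: exit_event_increasing].
have [[r [pr [rq hr]]]|nex] := pselect (exists r, p <= r /\ r <= q /\ 2^-1 <= theta r).
  by rewrite ge_min (le_trans hr) ?theta_mono // (le_trans p0).
pose g := expectP box_edges \1_exit_event - (d / 2)%:P * 'X.
have hg : g.[p] <= g.[q].
  apply: (@ler_hornerW _ p q); rewrite ?in_itv /= ?lexx ?ltW //.
  move=> y; rewrite in_itv /= => /andP[py yq].
  rewrite /g derivB derivM derivC derivX mul0r add0r mulr1 hornerD hornerN hornerC subr_ge0.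
  have hy : theta y < 2^-1.
    rewrite ltNge; apply/negP => h; apply: nex.
    by exists y; split; [exact: ltW | split => //; exact: ltW].
  apply: le_trans (theta_deriv_ge p0 (ltW py) (le_trans (ltW yq) q1) (ltW d0) Hd).
  rewrite -subr_ge0.
  have -> : d * (1 - theta y) - d / 2 = d * (2^-1 - theta y) by field.
  by rewrite mulr_ge0 ?subr_ge0 ?ltW.
move: hg; rewrite /g !hornerE -/(theta p) -/(theta q) => hg.
have t0 : 0 <= theta p.
  by apply: expect_ge0 => [|w]; [rewrite p0 (le_trans (ltW pq)) | exact: indic_ge0].
rewrite ge_min; apply/orP; right.
have -> : d * (q - p) / 2 = d / 2 * q - d / 2 * p by field.
move: t0; rewrite /theta /expect => t0; lra.
Qed.

End DuminilCopinTassion.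

Section Balls.
Variables (R : realType) (V E : choiceType) (src tgt : E -> V) (x : V).
Hypothesis lf : locally_finite src tgt.

Definition leaves_ball n : set (E -> bool) :=
  [set w | exists y, open_reach_V src tgt w set0 x y /\ ~ graph_ball src tgt x n y].

Lemma leaves_ballE n : leaves_ball n = exit_event src tgt x (graph_ball src tgt x n).
Proof.
apply/seteqP; split => w; last first.
  by move=> [y [ny c]]; exists y; split => //; apply: reach_mono c => // e [].
move=> [y [c ny]]; set B := graph_ball src tgt x n.
suff G : forall u, open_reach_V src tgt w set0 u y ->
    B u -> exits src tgt B w u.
  by apply: G c _; exact: graph_ball_center.
apply: reach_ind; first by move=> Ny; case: ny.
move=> u t e _ _ we hl _ IH Bu.
apply: (exits_edge lf (graph_ball_finite lf x n) we hl Bu) => -[Bt nCt].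
exact/nCt/IH.
Qed.

Lemma leaves_ball_determined n :
  determined_by (box_edges src tgt (graph_ball src tgt x n)) (leaves_ball n).
Proof.
rewrite leaves_ballE => w w' h [y [ny c]]; exists y; split => //.
by apply: reach_mono c => // e [we eF]; split => //; rewrite -h.
Qed.

Lemma measurable_leaves_ball n : measurable (leaves_ball n : set (Omega E)).
Proof. exact: determined_by_measurable (@leaves_ball_determined n). Qed.

Lemma bernoulli_leaves_ball (P : probability (Omega E) R) p :
  bernoulli_percolation p P ->
  forall n, P (leaves_ball n) = (theta src tgt x (graph_ball src tgt x n) p)%:E.
Proof.
move=> HP n.
have := bernoulli_expect HP (box_edges_uniq _ _ _) (@leaves_ball_determined n).
by rewrite leaves_ballE.
Qed.

Lemma conn_inf_bigcap : conn_inf src tgt x = \bigcap_n leaves_ball n.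
Proof. by apply/seteqP; split => w h; [move=> n _; exact: h n | move=> n; exact: h n I]. Qed.

Lemma measurable_conn_inf : measurable (conn_inf src tgt x : set (Omega E)).
Proof.
by rewrite conn_inf_bigcap; apply: bigcapT_measurable => n; exact: measurable_leaves_ball.
Qed.

Lemma conn_inf_ge (P : probability (Omega E) R) q (c : R) :
  bernoulli_percolation q P ->
  (forall n, c <= theta src tgt x (graph_ball src tgt x n) q) ->
  (c%:E <= P (conn_inf src tgt x))%E.
Proof.
move=> HP hc.
have cv : (P \o leaves_ball) @ \oo --> P (\bigcap_n leaves_ball n).
  apply: nonincreasing_cvg_mu => [| | |m n mn].
  - by rewrite (le_lt_trans (probability_le1 _ (measurable_leaves_ball 0))) // ltry.
  - exact: measurable_leaves_ball.
  - by apply: bigcapT_measurable => n; exact: measurable_leaves_ball.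
  - apply/subsetPset => w [y [cy ny]]; exists y; split => //.
    by move=> h; apply: ny; exact: walk_le_mono mn h.
rewrite conn_inf_bigcap -(cvg_lim _ cv) //; apply: lime_ge; first exact: cvgP cv.
by apply: nearW => n /=; rewrite (bernoulli_leaves_ball HP) lee_fin.
Qed.

End Balls.

(** * Cutsets *)

Section CutsetsOfFiniteSets.
Variables (R : realType) (V E : choiceType) (src tgt : E -> V) (x : V).
Variables (Lam S : set V).
Hypotheses (lf : locally_finite src tgt) (Lam_fin : finite_set Lam).
Hypotheses (S_Lam : S `<=` Lam) (Sx : S x).
Implicit Types (w : E -> bool).

Local Notation box_edges := (box_edges src tgt Lam).
Local Notation boundary := (boundary_edge src tgt S).
Local Notation reaches_edge_in := (reaches_edge_in src tgt x S).
Local Notation inner_reach := (inner_reach src tgt S).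

Lemma S_finite : finite_set S.
Proof. exact: sub_finite_set S_Lam Lam_fin. Qed.

Lemma incident_box_edge e : incident src tgt S e -> e \in box_edges.
Proof. by move=> h; apply/mem_box_edges => //; case: h => h; [left|right]; exact: S_Lam. Qed.

Lemma reaches_edge_in_determined e : determined_by box_edges (reaches_edge_in e).
Proof.
move=> w w' h hY.
have M u v : inner_reach w u v -> inner_reach w' u v.
  apply: reach_mono => // e' [we hi]; split => //.
  by rewrite -h // incident_box_edge //; left; case: hi.
by case: hY => hc; [left|right]; exact: M.
Qed.

Lemma measurable_reaches_edge_in e : measurable (reaches_edge_in e : set (Omega E)).
Proof. exact: determined_by_measurable (@reaches_edge_in_determined e). Qed.

Lemma bernoulli_reaches_edge_in (P : probability (Omega E) R) p :
  bernoulli_percolation p P -> forall e,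
  P (reaches_edge_in e : set (Omega E)) = (expect p box_edges \1_(reaches_edge_in e))%:E.
Proof.
move=> HP e.
by rewrite (bernoulli_expect HP (box_edges_uniq _ _ _) (@reaches_edge_in_determined e)).
Qed.

Lemma boundary_finite : finite_set boundary.
Proof.
apply: (@sub_finite_set _ _ [set` box_edges]) => // e hB.
exact/incident_box_edge/boundary_incident.
Qed.

Lemma boundary_edge_cutset : edge_cutset src tgt x boundary.
Proof.
apply: sub_finite_set S_finite => y h.
suff : S x -> S y by apply.
move: x h; apply: reach_ind => // u t e _ _ nB hl _ IH Su.
by apply: IH; apply: contrapT => nSt; exact/nB/(links_boundary hl Su nSt).
Qed.

Lemma reach_avoiding_boundary w e t :
  open_reach_E src tgt w (boundary `\ e) x t ->
  (S t /\ inner_reach w x t) \/ reaches_edge_in e w.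
Proof.
move=> h.
suff G : forall u, open_reach_E src tgt w (boundary `\ e) u t -> S u ->
    inner_reach w x u -> (S t /\ inner_reach w x t) \/ reaches_edge_in e w.
  by apply: G h Sx _; exact: reach_refl.
apply: reach_ind; first by left.
move=> u t' e' _ _ [we' nB] hl _ IH Su cu.
have [ee|ne] := pselect (e' = e).
  by right; rewrite -ee; case: (links_end hl) => hu; [left|right]; rewrite hu.
have St' : S t'.
  by apply: contrapT => nSt'; apply: nB; split => //; exact: links_boundary hl Su nSt'.
have hi := links_inner hl Su St'.
by apply: IH => //; apply: reach_trans cu _; exact: reach_step hl.
Qed.

Lemma A_E_boundary e : boundary e ->
  A_E src tgt x e boundary = [set w | w e = true /\ reaches_edge_in e w].
Proof.
move=> hB; apply/seteqP; split => w.
  move=> [we hr]; split => //.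
  by case: hr => /reach_avoiding_boundary [[_ c]|//]; [left|right].
move=> [we hY]; split => //.
have M u : inner_reach w x u ->
    open_reach_E src tgt w (boundary `\ e) x u.
  apply: reach_mono => // e' [we' [s1 s2]]; split => // -[[[h1 h2]|[h1 h2]] _] //.
by case: hY => h; [left|right]; exact: M.
Qed.

Lemma phi_EFin (p : R) : (phi src tgt x Lam p S)%:E =
  \sum_(e \in [set` box_edges])
    (\1_boundary e * expect p box_edges \1_(reaches_edge_in e))%:E.
Proof. by rewrite fsumEFin // -fsbig_seq //; exact: box_edges_uniq. Qed.

Lemma esum_A_E_le_phi (P : probability (Omega E) R) p :
  0 <= p <= 1 -> bernoulli_percolation p P ->
  (\esum_(e in boundary) P (A_E src tgt x e boundary : set (Omega E)) <=
   (phi src tgt x Lam p S)%:E)%E.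
Proof.
move=> p01 HP; rewrite esum_fset; last 2 first.
- exact: boundary_finite.
- by move=> e _; exact: measure_ge0.
set f := fun e => P (A_E src tgt x e boundary : set (Omega E)).
have -> : (\sum_(e \in boundary) f e =
    \sum_(e \in [set` box_edges]) (if e \in (boundary : set E) then f e else 0))%E.
  by rewrite -fsbig_mkcondr setIidr // => e hB; exact/incident_box_edge/boundary_incident.
rewrite phi_EFin; apply: lee_fsum => // e _.
case: ifPn => [/set_mem hB|_]; last first.
  by rewrite lee_fin mulr_ge0 ?indic_ge0 //; apply: expect_ge0 => // w; exact: indic_ge0.
rewrite indic_in // mul1r -(bernoulli_reaches_edge_in HP).
apply: le_measure; rewrite ?in_setE.
- rewrite A_E_boundary //; apply: measurableI.
    exact: measurable_edge_open.
  exact: measurable_reaches_edge_in.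
- exact: measurable_reaches_edge_in.
- by rewrite A_E_boundary // => w [].
Qed.

Definition outer_boundary : set V :=
  [set z | ~ S z /\ exists e t, links src tgt e t z /\ S t].

Lemma outer_boundary_finite : finite_set outer_boundary.
Proof.
apply: (@sub_finite_set _ _ (\bigcup_(t in S) neighbours src tgt t)).
  by move=> z [_ [e [t [hl St]]]]; exists t => //; exists e.
by apply: bigcup_finite; [exact: S_finite | move=> t _; exact: neighbours_finite].
Qed.

Lemma outer_boundary_cutset : vertex_cutset src tgt x outer_boundary.
Proof.
apply: sub_finite_set S_finite => y h.
suff : S x -> S y by apply.
move: x h; apply: reach_ind => // u t e _ nPt _ hl _ IH Su.
by apply: IH; apply: contrapT => nSt; apply: nPt; split => //; exists e, u.
Qed.

Definition outer_end e := if `[< S (src e) >] then tgt e else src e.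

Definition reaches_through z : set (E -> bool) :=
  [set w | exists e, e \in box_edges /\ boundary e /\ z = outer_end e /\
                     w e = true /\ reaches_edge_in e w].

Lemma reaches_through_determined z : determined_by box_edges (reaches_through z).
Proof.
move=> w w' h [e [eF [hB [hz [we hY]]]]]; exists e; do !split => //.
  by rewrite -h.
exact: reaches_edge_in_determined h hY.
Qed.

Lemma inner_reach_in w u v : inner_reach w u v -> S u ->
  reach src tgt (fun e => w e = true /\ inner_edge src tgt S e) S u v.
Proof.
move: u; apply: reach_ind; first by move=> _; exact: reach_refl.
move=> u t e _ _ [we [s1 s2]] hl _ IH Su.
have St : S t by case: hl => -[hs ht]; [rewrite -ht | rewrite -hs].
by apply: reach_trans (IH St); apply: reach_step hl.
Qed.

Lemma A_V_sub_reaches_through z : outer_boundary z ->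
  A_V src tgt x z outer_boundary `<=` reaches_through z.
Proof.
move=> [nSz _] w h.
suff G : forall u, open_reach_V src tgt w (outer_boundary `\ z) u z -> S u ->
    inner_reach w x u -> reaches_through z w.
  by apply: G h Sx _; exact: reach_refl.
apply: reach_ind; first by move=> Sz; case: nSz.
move=> u t e _ okt we hl _ IH Su cu.
have [tz|ntz] := pselect (t = z).
  subst t; exists e; split; first exact: incident_box_edge (links_incident hl Su).
  split; first exact: links_boundary hl Su nSz.
  split; first by rewrite /outer_end; case: hl => -[hs ht];
    [rewrite hs (asboolT Su) ht | rewrite hs (asboolF nSz)].
  by split => //; case: (links_end hl) => hu; [left|right]; rewrite hu.
have St : S t.
  by apply: contrapT => nSt; apply: okt; split => //; split => //; exists e, u.
have hi := links_inner hl Su St.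
by apply: (IH St); apply: reach_trans cu _; exact: reach_step hl.
Qed.

Lemma A_V_outer_boundary z : outer_boundary z ->
  A_V src tgt x z outer_boundary = reaches_through z.
Proof.
move=> Pz; apply/seteqP; split; first exact: A_V_sub_reaches_through.
move=> w [e [eF [hB [hz [we hY]]]]].
have M v : inner_reach w x v -> open_reach_V src tgt w (outer_boundary `\ z) x v.
  by move=> c; apply: reach_mono (inner_reach_in c Sx) => [e' []//|v' Sv' [[]]//].
have okz : ~ (outer_boundary `\ z) z by move=> [_ nz]; apply: nz.
have [Ss|nSs] := pselect (S (src e)).
  have nSt : ~ S (tgt e) by case: hB => -[].
  have c : inner_reach w x (src e).
    by case: hY => // c; case: nSt; apply: reach_inner_closed _ Sx c => e' [].
  apply: reach_trans (M _ c) _; apply: (@reach_step _ _ _ _ _ _ e) => //.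
    by move=> [[]].
  by left; rewrite hz /outer_end asboolT.
have St : S (tgt e) by case: hB => -[].
have c : inner_reach w x (tgt e).
  by case: hY => // c; case: nSs; apply: reach_inner_closed _ Sx c => e' [].
apply: reach_trans (M _ c) _; apply: (@reach_step _ _ _ _ _ _ e) => //.
  by move=> [[]].
by right; rewrite hz /outer_end asboolF.
Qed.

Lemma expect_reaches_through_le (p : R) z : 0 <= p <= 1 ->
  expect p box_edges \1_(reaches_through z) <= \sum_(e <- box_edges)
    \1_boundary e * (z == outer_end e)%:R * expect p box_edges \1_(reaches_edge_in e).
Proof.
move=> p01; under eq_bigr do rewrite -expectZ.
rewrite -expect_sum; apply: ler_expect => // w.
have [[e [eF [hB [hz [we hY]]]]]|nT] := pselect (reaches_through z w); last first.
  by rewrite indic_notin // sumr_ge0 // => e _; rewrite !mulr_ge0 ?indic_ge0 ?ler0n.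
rewrite indic_in; last by exists e.
rewrite (big_rem e eF) /= indic_in // indic_in // hz eqxx !mulr1 lerDl.
by apply: sumr_ge0 => e' _; rewrite !mulr_ge0 ?indic_ge0 ?ler0n.
Qed.

Lemma esum_A_V_le_phi (P : probability (Omega E) R) p :
  0 <= p <= 1 -> bernoulli_percolation p P ->
  (\esum_(z in outer_boundary) P (A_V src tgt x z outer_boundary : set (Omega E)) <=
   (phi src tgt x Lam p S)%:E)%E.
Proof.
move=> p01 HP; have Pfin := outer_boundary_finite.
rewrite esum_fset //.
rewrite fsbig_finite //; set Zs := enum_fset (fset_set outer_boundary).
apply: le_trans (_ : (\sum_(z <- Zs) (\sum_(e <- box_edges) \1_boundary e *
  (z == outer_end e)%:R * expect p box_edges \1_(reaches_edge_in e))%:E <= _)%E).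
  rewrite big_seq [X in (_ <= X)%E]big_seq; apply: lee_sum => z zZ.
  have Pz : outer_boundary z by move: zZ; rewrite in_fset_set ?in_setE.
  rewrite A_V_outer_boundary // (bernoulli_expect HP (box_edges_uniq _ _ _)
    (@reaches_through_determined z)) lee_fin.
  exact: expect_reaches_through_le.
rewrite sumEFin lee_fin exchange_big /=; apply: ler_sum => e _.
rewrite -mulr_suml; apply: ler_wpM2r; first by apply: expect_ge0 => // w; exact: indic_ge0.
rewrite -mulr_sumr; apply: ler_piMr; first exact: indic_ge0.
exact/uniq_sum_eq_le1/fset_uniq.
Qed.

End CutsetsOfFiniteSets.

Section VertexCutsetCover.
Variables (V E : choiceType) (src tgt : E -> V) (x : V) (Pi : set V).
Hypotheses (lf : locally_finite src tgt) (conn : connected_graph src tgt).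
Hypotheses (cut : vertex_cutset src tgt x Pi) (nPx : ~ Pi x).
Implicit Types (w : E -> bool).

Let cluster := [set y | reach src tgt (fun _ => True) (fun z => ~ Pi z) x y].
Let cluster_edges := box_edges src tgt cluster.

Let cluster_notin u : cluster u -> ~ Pi u.
Proof. by move=> Cu; case: (reach_last Cu) => [<-|]. Qed.

Let cluster_step u t e : cluster u -> ~ Pi t -> links src tgt e u t -> cluster t.
Proof.
move=> Cu nPt hl; have nPu := cluster_notin Cu.
by apply: reach_trans Cu _; exact: reach_step hl.
Qed.

Lemma A_V_cluster_path w v : A_V src tgt x v Pi w ->
  reach src tgt (fun e => w e = true /\ e \in cluster_edges) (fun z => ~ (Pi `\ v) z) x v.
Proof.
move=> h.
suff G : forall u, open_reach_V src tgt w (Pi `\ v) u v ->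
    cluster u ->
    reach src tgt (fun e => w e = true /\ e \in cluster_edges) (fun z => ~ (Pi `\ v) z) u v.
  by apply: G h _; exact: reach_refl.
apply: reach_ind; first by move=> _; exact: reach_refl.
move=> u t e oku okt we hl _ IH Cu.
have eC : e \in cluster_edges.
  by apply/(mem_box_edges lf cut); exact: links_incident hl Cu.
have [tv|ntv] := pselect (t = v); first by subst t; apply: reach_step hl.
have Ct : cluster t by apply: cluster_step Cu _ hl => Pt; apply: okt.
by apply: reach_trans (IH Ct); apply: reach_step hl.
Qed.

Lemma A_V_cluster_determined v : determined_by cluster_edges (A_V src tgt x v Pi).
Proof.
move=> w w' h /A_V_cluster_path hw; apply: reach_mono hw => // e [we eC].
by rewrite -h.
Qed.

Let frontier := Pi `&` \bigcup_(u in cluster) neighbours src tgt u.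

Lemma conn_inf_sub_A_V :
  conn_inf src tgt x `<=` \bigcup_(v in frontier) A_V src tgt x v Pi.
Proof.
move=> w hw.
have [N hN] := finite_set_in_ball conn x cut.
have [y [hy ny]] := hw N.
have nCy : ~ cluster y by move=> /hN.
suff G : forall u, open_reach_V src tgt w set0 u y ->
    open_reach_V src tgt w Pi x u ->
    (\bigcup_(v in frontier) A_V src tgt x v Pi) w.
  by apply: G hy _; exact: reach_refl.
apply: reach_ind; first by move=> h; case: nCy; apply: reach_mono h.
move=> u t e _ _ we hl _ IH ho.
have Cu : cluster u by apply: reach_mono ho.
have nPu := cluster_notin Cu.
have [Pt|nPt] := pselect (Pi t); last first.
  by apply: IH; apply: reach_trans ho _; exact: reach_step hl.
exists t; first by split => //; exists u => //; exists e.
apply: reach_trans (reach_mono _ _ ho) _ => //; first by move=> z nz [].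
apply: reach_step hl => //; first by case.
by case=> _; apply.
Qed.

Lemma conn_inf_le_esum_A_V_notin (d : measure_display) (R : realType)
    (mu : {measure set (Omega E) -> \bar R}) :
  (mu (conn_inf src tgt x) <= \esum_(v in Pi) mu (A_V src tgt x v Pi))%E.
Proof.
apply: (@measure_le_esum_cover _ _ _ mu _ Pi frontier).
- by apply: finite_setIr; apply: bigcup_finite => // u _; exact: neighbours_finite.
- by move=> v [].
- by move=> v _; exact: determined_by_measurable (@A_V_cluster_determined v).
- exact: measurable_conn_inf.
- exact: conn_inf_sub_A_V.
Qed.

End VertexCutsetCover.

Lemma conn_inf_le_esum_A_V (V E : choiceType) (src tgt : E -> V) (x : V) (Pi : set V)
    (d : measure_display) (R : realType) (mu : {measure set (Omega E) -> \bar R}) :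
  locally_finite src tgt -> connected_graph src tgt -> vertex_cutset src tgt x Pi ->
  (mu (conn_inf src tgt x) <= \esum_(v in Pi) mu (A_V src tgt x v Pi))%E.
Proof.
move=> lf conn cut; have [xP|nxP] := pselect (Pi x); last first.
  exact: conn_inf_le_esum_A_V_notin.
apply: esum_ge; exists [set x]; first by split; [exact: finite_set1 | move=> z ->].
rewrite fsbig_set1.
have -> : A_V src tgt x x Pi = setT by apply/seteqP; split => // w _; exact: reach_refl.
by apply: le_measure; rewrite ?in_setE //; exact: measurable_conn_inf.
Qed.

Section EdgeCutsetCover.
Variables (V E : choiceType) (src tgt : E -> V) (x : V) (Pi : set E).
Hypotheses (lf : locally_finite src tgt) (conn : connected_graph src tgt).
Hypothesis cut : edge_cutset src tgt x Pi.
Implicit Types (w : E -> bool).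

Let cluster := [set y | reach src tgt (fun e => ~ Pi e) (fun _ => True) x y].
Let cluster_edges := box_edges src tgt cluster.

Lemma open_reach_cluster_edges w t : open_reach_E src tgt w Pi x t ->
  reach src tgt (fun e => (w e = true /\ ~ Pi e) /\ e \in cluster_edges) (fun _ => True) x t.
Proof.
move=> h.
suff G : forall u, open_reach_E src tgt w Pi u t -> cluster u -> reach src tgt
    (fun e => (w e = true /\ ~ Pi e) /\ e \in cluster_edges) (fun _ => True) u t.
  by apply: G h _; exact: reach_refl.
apply: reach_ind; first by move=> _; exact: reach_refl.
move=> u t' e _ _ [we nPe] hl _ IH Cu.
have eC : e \in cluster_edges.
  by apply/(mem_box_edges lf cut); exact: links_incident hl Cu.
have Ct' : cluster t' by apply: reach_trans Cu _; exact: reach_step hl.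
by apply: reach_trans (IH Ct'); exact: reach_step hl.
Qed.

Lemma A_E_prefix e w : A_E src tgt x e Pi w ->
  exists t, (src e = t \/ tgt e = t) /\ open_reach_E src tgt w Pi x t.
Proof.
have G t : src e = t \/ tgt e = t ->
    open_reach_E src tgt w (Pi `\ e) x t ->
    exists t', (src e = t' \/ tgt e = t') /\ open_reach_E src tgt w Pi x t'.
  move=> ht h.
  suff G2 : forall u, open_reach_E src tgt w (Pi `\ e) u t ->
      open_reach_E src tgt w Pi x u ->
      exists t', (src e = t' \/ tgt e = t') /\ open_reach_E src tgt w Pi x t'.
    by apply: G2 h _; exact: reach_refl.
  apply: reach_ind; first by exists t.
  move=> u t1 e' _ _ [we' nP'] hl _ IH ru.
  have [eu|neu] := pselect (src e = u \/ tgt e = u); first by exists u.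
  have nPe' : ~ Pi e'.
    move=> Pe'; apply: nP'; split => // ee; apply: neu; rewrite -ee.
    exact: links_end hl.
  by apply: IH; apply: reach_trans ru _; exact: reach_step hl.
by move=> [we [h|h]]; [apply: G h; left | apply: G h; right].
Qed.

Lemma A_E_cluster_determined e : incident src tgt cluster e ->
  determined_by cluster_edges (A_E src tgt x e Pi).
Proof.
move=> Ce w w' h hA; have [t [ht /open_reach_cluster_edges rt]] := A_E_prefix hA.
have eC : e \in cluster_edges by apply/(mem_box_edges lf cut).
split; first by rewrite -h //; case: hA.
have rt' : reach src tgt (fun e' => w' e' = true /\ ~ (Pi `\ e) e') (fun _ => True) x t.
  by apply: reach_mono rt => // e' [[we' nP'] eC']; split; [rewrite -h | move=> []].
by case: ht => ht; [left|right]; rewrite ht.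
Qed.

Let frontier := Pi `&` incident src tgt cluster.

Lemma conn_inf_sub_A_E :
  conn_inf src tgt x `<=` \bigcup_(e in frontier) A_E src tgt x e Pi.
Proof.
move=> w hw.
have [N hN] := finite_set_in_ball conn x cut.
have [y [hy ny]] := hw N.
have nCy : ~ cluster y by move=> /hN.
suff G : forall u, open_reach_V src tgt w set0 u y ->
    open_reach_E src tgt w Pi x u -> (\bigcup_(e in frontier) A_E src tgt x e Pi) w.
  by apply: G hy _; exact: reach_refl.
apply: reach_ind; first by move=> h; case: nCy; apply: reach_mono h => // e [].
move=> u t e _ _ we hl _ IH ho.
have Cu : cluster u by apply: reach_mono ho => // e' [].
have [Pe|nPe] := pselect (Pi e); last first.
  by apply: IH; apply: reach_trans ho _; exact: reach_step hl.
exists e; first by split => //; exact: links_incident hl Cu.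
have ru : open_reach_E src tgt w (Pi `\ e) x u.
  by apply: reach_mono ho => // e' [we' nP']; split => // -[].
split => //.
by case: (links_end hl) => hu; [left|right]; rewrite hu.
Qed.

Lemma conn_inf_le_esum_A_E (d : measure_display) (R : realType)
    (mu : {measure set (Omega E) -> \bar R}) :
  (mu (conn_inf src tgt x) <= \esum_(e in Pi) mu (A_E src tgt x e Pi))%E.
Proof.
apply: (@measure_le_esum_cover _ _ _ mu _ Pi frontier).
- by apply: finite_setIr; exact: incident_finite.
- by move=> e [].
- by move=> e [_ Ce]; exact: determined_by_measurable (A_E_cluster_determined Ce).
- exact: measurable_conn_inf.
- exact: conn_inf_sub_A_E.
Qed.

End EdgeCutsetCover.

(** * Critical values *)

Section CriticalValues.
Variables (R : realType) (V E : choiceType) (src tgt : E -> V) (x : V).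
Variable Pf : R -> probability (Omega E) R.
Hypothesis lf : locally_finite src tgt.
Hypothesis HB : forall p : R, 0 <= p <= 1 -> bernoulli_percolation p (Pf p).

Let zero_set :=
  [set p : R | 0 <= p <= 1 /\ Pf p (conn_inf src tgt x : set (Omega E)) = 0%E].

Lemma zero_set_unit a : zero_set a -> 0 <= a <= 1.
Proof. by case. Qed.

(* A uniform lower bound on [phi p] contradicts [theta_ge] at any [q] in
   [(p, p_c)]. *)
Lemma phi_not_bounded_below_pc p d : 0 <= p -> p < p_c src tgt x Pf -> 0 < d ->
  ~ (forall n S, S `<=` graph_ball src tgt x n -> S x ->
     d <= phi src tgt x (graph_ball src tgt x n) p S).
Proof.
move=> p0 ppc d0 Hd.
have Cne : zero_set !=set0.
  apply: contrapT => nC.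
  have C0 : zero_set = set0 by apply/seteqP; split => // a Ca; apply: nC; exists a.
  by move: ppc; rewrite /p_c -/zero_set C0 sup0; lra.
have [q [q01 Pq] pq] := sup_gt Cne ppc.
have /andP[q0 q1] := q01.
set c := Num.min (2^-1) (d * (q - p) / 2).
have c0 : 0 < c by rewrite lt_min invr_gt0 ltr0n /= divr_gt0 // mulr_gt0 // subr_gt0.
have : (c%:E <= Pf q (conn_inf src tgt x : set (Omega E)))%E.
  apply: (conn_inf_ge lf (HB q01)) => n.
  apply: (theta_ge lf (graph_ball_finite lf x n) (graph_ball_center src tgt x n)) => //.
  by move=> S SB Sx; apply: Hd.
by rewrite Pq lee_fin; lra.
Qed.

(* [p'_cut_E] and [p'_cut_V] are the two instances of the left-hand side. *)
Lemma p'_cut_eq_pc (I : choiceType) (cutset : set I -> Prop)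
    (A : I -> set I -> set (E -> bool)) (cut_of : set V -> set I) :
  (forall p Pi, 0 <= p <= 1 -> cutset Pi ->
     (Pf p (conn_inf src tgt x) <= \esum_(i in Pi) Pf p (A i Pi))%E) ->
  (forall p n S, 0 <= p <= 1 -> S `<=` graph_ball src tgt x n -> S x ->
     cutset (cut_of S) /\
     (\esum_(i in cut_of S) Pf p (A i (cut_of S)) <=
      (phi src tgt x (graph_ball src tgt x n) p S)%:E)%E) ->
  sup [set p : R | 0 <= p <= 1 /\
    ereal_inf [set s | exists Pi, cutset Pi /\
      s = (\esum_(i in Pi) Pf p (A i Pi : set (Omega E)))%E] = 0%E] =
  p_c src tgt x Pf.
Proof.
move=> union_bound cut_le_phi; apply: sup_eq_of_dense_sub zero_set_unit _ _.
  move=> p [p01 hinf]; split => //.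
  apply/eqP; rewrite eq_le measure_ge0 andbT -hinf.
  by apply: le_ereal_inf_tmp => s [Pi [hPi ->]]; exact: union_bound.
move=> p p0 ppc; have [_ /andP[_ pc1]] := sup_unit_interval zero_set_unit.
have p01 : 0 <= p <= 1 by rewrite p0 (le_trans (ltW ppc)).
split => //; apply/eqP; apply: contrapT => /negP hne.
have [|d d0 hd] := ereal_inf_gt0 _ hne.
  by move=> s [Pi [_ ->]]; apply: esum_ge0 => i _; exact: measure_ge0.
apply: (phi_not_bounded_below_pc p0 ppc d0) => n S SB Sx.
have [hcut hle] := cut_le_phi p n S p01 SB Sx.
by rewrite -lee_fin; apply: le_trans hle; apply: hd; exists (cut_of S).
Qed.

End CriticalValues.

Theorem theorem1p6 (R : realType) (V E : choiceType) (src tgt : E -> V)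
  (x : V) (Pf : R -> probability (Omega E) R) :
  simple_graph src tgt ->
  locally_finite src tgt ->
  connected_graph src tgt ->
  @infinite_graph V ->
  (forall p : R, 0 <= p <= 1 -> bernoulli_percolation p (Pf p)) ->
  p'_cut_E src tgt x Pf = p'_cut_V src tgt x Pf /\
  p'_cut_V src tgt x Pf = p_c src tgt x Pf.
Proof.
move=> _ lf conn _ HB.
have cutV : p'_cut_V src tgt x Pf = p_c src tgt x Pf.
  apply: (p'_cut_eq_pc lf HB (cut_of := outer_boundary src tgt)).
    by move=> p Pi _ cut; exact: conn_inf_le_esum_A_V.
  move=> p n S p01 SB Sx; have Bfin := graph_ball_finite lf x n.
  split; first exact: outer_boundary_cutset Bfin SB Sx.
  by apply: (esum_A_V_le_phi lf Bfin SB Sx p01); exact: HB.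
have cutE : p'_cut_E src tgt x Pf = p_c src tgt x Pf.
  apply: (p'_cut_eq_pc lf HB (cut_of := boundary_edge src tgt)).
    by move=> p Pi _ cut; exact: conn_inf_le_esum_A_E.
  move=> p n S p01 SB Sx; have Bfin := graph_ball_finite lf x n.
  split; first exact: boundary_edge_cutset Bfin SB Sx.
  by apply: (esum_A_E_le_phi lf Bfin SB Sx p01); exact: HB.
by rewrite cutE cutV.
Qed.
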